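(* Let $n\in\mathbb{N}_0$. For $0\le k\le n/2$, the polynomial $r_{n,2k}:=2\sum_{0\le j\le n/2}M^{(n)}_{2j,2k}b_{n,2j}+b_{n,2k}$ is totally symmetric, and for $0\le k\le (n-1)/2$ the polynomial $r_{n,2k+1}:=-2\sum_{0\le j\le (n-1)/2}M^{(n)}_{2j+1,2k+1}b_{n,2j+1}+b_{n,2k+1}$ satisfies $Mr_{n,2k+1}=-r_{n,2k+1}=Rr_{n,2k+1}$.
   Context: $\widehat T$ is the triangle with vertices $(0,0),(1,0),(0,1)$. $P_m^{(\alpha,\beta)}$ are the Jacobi polynomials with $P_m^{(\alpha,\beta)}(1)=(\alpha+1)_m/m!$; $P_k^{(0,0)}$ are the Legendre polynomials. For $0\le k\le n$, $b_{n,k}(x_1,x_2):=(x_1+x_2)^kP^{(0,2k+1)}_{n-k}(2(x_1+x_2)-1)P^{(0,0)}_k\!\left(\frac{x_1-x_2}{x_1+x_2}\right)$; these form a basis of the space $\mathbb{P}^\perp_{n,n-1}(\widehat T)$ of polynomials of degree $\le n$ that are $L^2(\widehat T)$-orthogonal to all polynomials of degree $\le n-1$. Define $Mp(x_1,x_2):=p(1-x_1-x_2,x_2)$ and $Rp(x_1,x_2):=p(x_2,x_1)$, and let $M^{(n)}_{j,k}$ be the matrix entries of $M$ in this basis: $Mb_{n,k}=\sum_{j=0}^n b_{n,j}M^{(n)}_{j,k}$. A function $u$ on $\widehat T$ is totally symmetric if $u\circ\chi=u$ for every affine bijection $\chi$ of $\widehat T$ onto itself (equivalently $Ru=u=Mu$).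 *)

From mathcomp Require Import all_boot all_order all_algebra.
From mathcomp Require Import reals.
Set Implicit Arguments. Unset Strict Implicit. Unset Printing Implicit Defensive.
Import Order.TTheory GRing.Theory Num.Theory.
Local Open Scope ring_scope.

Section Defs.
Variable R : realType.

(* Jacobi polynomial P_m^{(a,b)} for nonnegative integer parameters, via the
   standard explicit formula
   P_m^{(a,b)}(x) = sum_s C(m+a, m-s) C(m+b, s) ((x-1)/2)^s ((x+1)/2)^(m-s);
   normalisation P_m^{(a,b)}(1) = C(m+a,m) = (a+1)_m/m!. *)
Definition jacobi (a b m : nat) (x : R) : R :=
  \sum_(s < m.+1) ('C(m + a, m - s) * 'C(m + b, s))%:R
     * ((x - 1) / 2) ^+ s * ((x + 1) / 2) ^+ (m - s).

Definition legendre (k : nat) (x : R) : R := jacobi 0 0 k x.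

Definition inT (x1 x2 : R) : Prop := 0 <= x1 /\ 0 <= x2 /\ x1 + x2 <= 1.

(* b_{n,k}(x1,x2) = (x1+x2)^k P^{(0,2k+1)}_{n-k}(2(x1+x2)-1) P_k((x1-x2)/(x1+x2)).
   (Division by 0 is 0 in MathComp; on the closed triangle this only occurs at
   the origin, where the formula then gives the correct polynomial value.) *)
Definition bnk (n k : nat) (x1 x2 : R) : R :=
  (x1 + x2) ^+ k * jacobi 0 (2 * k + 1) (n - k) (2 * (x1 + x2) - 1)
    * legendre k ((x1 - x2) / (x1 + x2)).

Definition Mop (p : R -> R -> R) : R -> R -> R := fun x1 x2 => p (1 - x1 - x2) x2.
Definition Rop (p : R -> R -> R) : R -> R -> R := fun x1 x2 => p x2 x1.

Definition affine_bij_T (chi : R * R -> R * R) : Prop :=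
  (exists a11 a12 a21 a22 c1 c2 : R,
     forall x : R * R,
       chi x = (a11 * x.1 + a12 * x.2 + c1, a21 * x.1 + a22 * x.2 + c2))
  /\ (forall x : R * R, inT x.1 x.2 -> inT (chi x).1 (chi x).2)
  /\ (forall x y : R * R, inT x.1 x.2 -> inT y.1 y.2 -> chi x = chi y -> x = y)
  /\ (forall y : R * R, inT y.1 y.2 -> exists x : R * R, inT x.1 x.2 /\ chi x = y).

Definition totally_symmetric (u : R -> R -> R) : Prop :=
  forall chi, affine_bij_T chi ->
    forall x : R * R, inT x.1 x.2 -> u (chi x).1 (chi x).2 = u x.1 x.2.

Definition is_M_matrix (n : nat) (Mm : nat -> nat -> R) : Prop :=
  forall k, (k <= n)%N -> forall x1 x2, inT x1 x2 ->
    Mop (bnk n k) x1 x2 = \sum_(j < n.+1) bnk n j x1 x2 * Mm j k.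

Definition r_even (n : nat) (Mm : nat -> nat -> R) (k : nat) : R -> R -> R :=
  fun x1 x2 => 2 * (\sum_(j < n.+1 | (2 * j <= n)%N) Mm (2 * j)%N (2 * k)%N * bnk n (2 * j) x1 x2)
               + bnk n (2 * k) x1 x2.

Definition r_odd (n : nat) (Mm : nat -> nat -> R) (k : nat) : R -> R -> R :=
  fun x1 x2 => - 2 * (\sum_(j < n.+1 | (2 * j + 1 <= n)%N)
                        Mm (2 * j + 1)%N (2 * k + 1)%N * bnk n (2 * j + 1) x1 x2)
               + bnk n (2 * k + 1) x1 x2.

End Defs.

From mathcomp Require Import all_boot all_order all_algebra.
From mathcomp Require Import reals ring lra zify.
From Stdlib Require Import Classical.

Set Implicit Arguments.
Unset Strict Implicit.
Unset Printing Implicit Defensive.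
Import Order.TTheory GRing.Theory Num.Theory.
Local Open Scope ring_scope.

(* An affine bijection of the triangle permutes its vertices, which are its
   extreme points, so it is one of the six maps generated by R and M; total
   symmetry therefore amounts to invariance under R and M.  The Legendre factor
   gives R b_{n,m} = (-1)^m b_{n,m}; expanding M b_{n,m} and (M b_{n,m}) o R in
   the basis then shows r_{n,m} = b + e M b + R M b with b = b_{n,m} and
   e = (-1)^m.  As e^2 = 1 and M R M = R M R, both R and M multiply this orbit
   sum by e. *)

Lemma big_ord_even_odd (V : nmodType) n (f : nat -> V) :
  \sum_(j < n.+1) f j = \sum_(j < n.+1 | (2 * j <= n)%N) f (2 * j)%N
                      + \sum_(j < n.+1 | (2 * j + 1 <= n)%N) f (2 * j + 1)%N.
Proof.
elim: n f => [|n IHn] f; rewrite [X in _ = X + _]big_mkcond [X in _ = _ + X]big_mkcond /=.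
  by rewrite !big_ord1 /= addr0.
rewrite big_ord_recl [X in _ = X + _]big_ord_recl [X in _ = _ + X]big_ord_recr /=.
have -> : (2 * n.+1 + 1 <= n.+1)%N = false by lia.
rewrite (IHn (fun j => f j.+1)) muln0 addr0 -!addrA; congr (_ + _).
rewrite addrC [X in X + _]big_mkcond [X in _ + X]big_mkcond; congr (_ + _);
  apply: eq_bigr => j _.
- by rewrite addn1 ltnS.
- have -> : (2 * bump 0 j = (2 * j + 1).+1)%N by rewrite /bump; lia.
  by rewrite ltnS.
Qed.

Lemma signr_even (R : pzRingType) k : (-1) ^+ (2 * k) = 1 :> R.
Proof. by rewrite -signr_odd oddM. Qed.

Lemma signr_even_add1 (R : pzRingType) k : (-1) ^+ (2 * k + 1) = -1 :> R.
Proof. by rewrite exprD signr_even mul1r. Qed.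

Section Triangle.
Variable R : realType.
Implicit Types (u : R -> R -> R) (p q v : R * R).

Lemma inT_swap (x1 x2 : R) : inT x1 x2 -> inT x2 x1.
Proof. by rewrite /inT; lra. Qed.

Lemma inT_Mop (x1 x2 : R) : inT x1 x2 -> inT (1 - x1 - x2) x2.
Proof. by rewrite /inT; lra. Qed.

Definition vertex p : Prop := p = (0, 0) \/ p = (1, 0) \/ p = (0, 1).

Definition midpoint p q : R * R := ((p.1 + q.1) / 2, (p.2 + q.2) / 2).

Definition bary (c0 c1 c2 x : R * R) : R * R :=
  (c0.1 + (c1.1 - c0.1) * x.1 + (c2.1 - c0.1) * x.2,
   c0.2 + (c1.2 - c0.2) * x.1 + (c2.2 - c0.2) * x.2).

Definition affine (chi : R * R -> R * R) : Prop :=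
  exists a11 a12 a21 a22 c1 c2 : R,
    forall x, chi x = (a11 * x.1 + a12 * x.2 + c1, a21 * x.1 + a22 * x.2 + c2).

Definition triangle_symmetry (y x : R * R) : Prop :=
  y = x \/ y = (x.2, x.1) \/ y = (1 - x.1 - x.2, x.2) \/ y = (x.2, 1 - x.1 - x.2) \/
  y = (x.1, 1 - x.1 - x.2) \/ y = (1 - x.1 - x.2, x.1).

Lemma vertex_inT v : vertex v -> inT v.1 v.2.
Proof. by rewrite /inT; case=> [|[|]] -> /=; lra. Qed.

Lemma inT_midpoint p q :
  inT p.1 p.2 -> inT q.1 q.2 -> inT (midpoint p q).1 (midpoint p q).2.
Proof. by rewrite /inT /=; lra. Qed.

Lemma vertex_midpoint v p q : vertex v -> inT p.1 p.2 -> inT q.1 q.2 ->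
  midpoint p q = v -> p = v /\ q = v.
Proof.
case: p q => [p1 p2] [q1 q2]; rewrite /inT /=.
by case=> [|[|]] -> [? [? ?]] [? [? ?]] [? ?]; split; congr (_, _); lra.
Qed.

Lemma nonvertex_midpoint q : inT q.1 q.2 -> ~ vertex q ->
  exists p p', [/\ p <> p', inT p.1 p.2, inT p'.1 p'.2 & midpoint p p' = q].
Proof.
case: q => q1 q2; rewrite /inT /vertex /= => -[q1_ge0 [q2_ge0 q12_le1]] nv.
suff [d1 [d2 [d_neq0 [hp hp']]]] : exists d1 d2 : R, [/\ d1 != 0 \/ d2 != 0,
    inT (q1 + d1) (q2 + d2) & inT (q1 - d1) (q2 - d2)].
  exists (q1 + d1, q2 + d2), (q1 - d1, q2 - d2); split => //.
  - by case=> e1 e2; case: d_neq0 => /eqP; lra.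
  - by rewrite /midpoint /=; congr (_, _); lra.
(* Move along the edge x1 = 0 or x2 = 0 containing [q], or otherwise along
   [(1, -1)], which keeps x1 + x2 fixed. *)
have [q1_0|q1_neq0] := eqVneq q1 0; last have [q2_0|q2_neq0] := eqVneq q2 0.
- have q2_neq0 : q2 != 0 by apply/eqP => q2_0; apply: nv; left; rewrite q1_0 q2_0.
  have q2_neq1 : q2 != 1 by apply/eqP => q2_1; apply: nv; right; right; rewrite q1_0 q2_1.
  exists 0, (q2 * (1 - q2)); split; rewrite /inT; [right | nra..].
  by rewrite mulf_neq0 // subr_eq0 eq_sym.
- have q1_neq1 : q1 != 1 by apply/eqP => q1_1; apply: nv; right; left; rewrite q1_1 q2_0.
  exists (q1 * (1 - q1)), 0; split; rewrite /inT; [left | nra..].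
  by rewrite mulf_neq0 // subr_eq0 eq_sym.
- exists (q1 * q2), (- (q1 * q2)); split; rewrite /inT; [left | nra..].
  by rewrite mulf_neq0.
Qed.

Lemma affine_midpoint chi p q : affine chi ->
  chi (midpoint p q) = midpoint (chi p) (chi q).
Proof.
case=> [a11 [a12 [a21 [a22 [c1 [c2 chiE]]]]]].
by rewrite !chiE /midpoint /=; congr (_, _); field.
Qed.

Lemma affine_bary chi (x : R * R) :
  affine chi -> chi x = bary (chi (0, 0)) (chi (1, 0)) (chi (0, 1)) x.
Proof.
case=> [a11 [a12 [a21 [a22 [c1 [c2 chiE]]]]]].
by rewrite !chiE /bary /=; congr (_, _); ring.
Qed.

Lemma affine_bij_T_vertex chi v : affine_bij_T chi -> vertex v -> vertex (chi v).
Proof.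
case=> chi_affine [chi_T [chi_inj chi_onto]] hv; have hvT := vertex_inT hv.
apply: NNPP => nv.
have [p [p' [pp' hp hp' mid]]] := nonvertex_midpoint (chi_T _ hvT) nv.
have [a [haT cha]] := chi_onto p hp; have [b [hbT chb]] := chi_onto p' hp'.
have mid_ab : midpoint a b = v.
  by apply: chi_inj => //; [exact: inT_midpoint | rewrite affine_midpoint // cha chb].
have [a_v b_v] := vertex_midpoint hv haT hbT mid_ab.
by apply: pp'; rewrite -cha -chb a_v b_v.
Qed.

Lemma bary_vertex c0 c1 c2 (x : R * R) : vertex c0 -> vertex c1 -> vertex c2 ->
  c0 <> c1 -> c0 <> c2 -> c1 <> c2 -> triangle_symmetry (bary c0 c1 c2 x) x.
Proof.
case: x => x1 x2.
move=> [->|[->|->]] [->|[->|->]] [->|[->|->]] // _ _ _;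
  rewrite /bary /triangle_symmetry /=;
  do ?[by left; congr (_, _); ring | right]; congr (_, _); ring.
Qed.

Lemma affine_bij_T_symmetry chi (x : R * R) :
  affine_bij_T chi -> triangle_symmetry (chi x) x.
Proof.
move=> hchi; have [chi_affine [_ [chi_inj _]]] := hchi.
have chi_neq p q : vertex p -> vertex q -> p <> q -> chi p <> chi q.
  by move=> hp hq + /(chi_inj _ _ (vertex_inT hp) (vertex_inT hq)).
have V0 : vertex (0, 0) by left.
have V1 : vertex (1, 0) by right; left.
have V2 : vertex (0, 1) by right; right.
rewrite (affine_bary x chi_affine); apply: bary_vertex.
1-3: by apply: affine_bij_T_vertex.
all: by apply: chi_neq => // -[]; lra.
Qed.

Lemma triangle_symmetry_invariant u (y x : R * R) :
  (forall x1 x2, Rop u x1 x2 = u x1 x2) -> (forall x1 x2, Mop u x1 x2 = u x1 x2) ->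
  triangle_symmetry y x -> u y.1 y.2 = u x.1 x.2.
Proof.
rewrite /Rop /Mop => uR uM; case: x => x1 x2 /=.
have e : 1 - x2 - x1 = 1 - x1 - x2 by ring.
case=> [|[|[|[|[|]]]]] -> /=.
- by [].
- exact: uR.
- exact: uM.
- by rewrite uR uM.
- by rewrite uR -e uM uR.
- by rewrite -e uM uR.
Qed.

Lemma totally_symmetric_Rop_Mop u :
  (forall x1 x2, Rop u x1 x2 = u x1 x2) -> (forall x1 x2, Mop u x1 x2 = u x1 x2) ->
  totally_symmetric u.
Proof.
move=> uR uM chi hchi x _.
exact: triangle_symmetry_invariant uR uM (affine_bij_T_symmetry x hchi).
Qed.

Lemma totally_symmetric_eq_inT u w : (forall x1 x2, inT x1 x2 -> u x1 x2 = w x1 x2) ->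
  totally_symmetric w -> totally_symmetric u.
Proof.
move=> uw hw chi hchi x hx; have [_ [chi_T _]] := hchi.
by rewrite !uw //; [exact: hw | exact: chi_T].
Qed.

End Triangle.

Section Symmetrize.
Variable R : realType.

Definition symmetrize (e : R) (B : R -> R -> R) : R -> R -> R :=
  fun x1 x2 => B x1 x2 + e * Mop B x1 x2 + Rop (Mop B) x1 x2.

Variables (e : R) (B : R -> R -> R).
Hypothesis e_sqr : e ^+ 2 = 1.
Hypothesis B_Rop : forall x1 x2, Rop B x1 x2 = e * B x1 x2.

Lemma Rop_symmetrize x1 x2 : Rop (symmetrize e B) x1 x2 = e * symmetrize e B x1 x2.
Proof.
move: B_Rop; rewrite /symmetrize /Rop /Mop => BR.
rewrite BR !mulrDr mulrA -expr2 e_sqr mul1r.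
ring.
Qed.

Lemma Mop_symmetrize x1 x2 : Mop (symmetrize e B) x1 x2 = e * symmetrize e B x1 x2.
Proof.
move: B_Rop; rewrite /symmetrize /Rop /Mop => BR.
have -> : 1 - (1 - x1 - x2) - x2 = x1 by ring.
have -> : 1 - x2 - (1 - x1 - x2) = x1 by ring.
have -> : 1 - x2 - x1 = 1 - x1 - x2 by ring.
rewrite (BR (1 - x1 - x2) x1) !mulrDr mulrA -expr2 e_sqr mul1r.
ring.
Qed.

End Symmetrize.

Section Basis.
Variable R : realType.

Lemma jacobiN a b m (x : R) : jacobi a b m (- x) = (-1) ^+ m * jacobi b a m x.
Proof.
rewrite /jacobi mulr_sumr (reindex_inj rev_ord_inj); apply: eq_bigr => s _ /=.
rewrite subSS subKn ?leq_ord // mulnC -opprD (addrC (- x)) -(opprB x 1) !mulNr.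
rewrite (exprNn ((x + 1) / 2)) (exprNn ((x - 1) / 2)).
rewrite -[X in _ = (-1) ^+ X * _](subnK (leq_ord s)) exprD.
ring.
Qed.

Lemma bnk_swap n k (x1 x2 : R) : bnk n k x2 x1 = (-1) ^+ k * bnk n k x1 x2.
Proof.
rewrite /bnk /legendre (addrC x2) -(opprB x1 x2) mulNr jacobiN.
ring.
Qed.

Variables (n : nat) (Mm : nat -> nat -> R).
Hypothesis Mm_M : is_M_matrix n Mm.

Lemma Mop_bnk_signed m (x1 x2 : R) : (m <= n)%N -> inT x1 x2 ->
  (-1) ^+ m * Mop (bnk n m) x1 x2 + Rop (Mop (bnk n m)) x1 x2
  = \sum_(j < n.+1) ((-1) ^+ m + (-1) ^+ j) * Mm j m * bnk n j x1 x2.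
Proof.
move=> m_le_n x12T; rewrite /Rop (Mm_M m_le_n x12T) (Mm_M m_le_n (inT_swap x12T)).
rewrite mulr_sumr -big_split /=; apply: eq_bigr => j _.
rewrite (bnk_swap n j x1 x2); ring.
Qed.

Lemma r_even_symmetrize k : (2 * k <= n)%N -> forall x1 x2 : R, inT x1 x2 ->
  r_even n Mm k x1 x2 = symmetrize ((-1) ^+ (2 * k)) (bnk n (2 * k)) x1 x2.
Proof.
move=> k_le x1 x2 x12T; rewrite /symmetrize -addrA Mop_bnk_signed //.
rewrite (big_ord_even_odd _ (fun j => ((-1) ^+ _ + (-1) ^+ j) * Mm j _ * bnk n j x1 x2)).
rewrite [X in _ + (_ + X)]big1 => [|j _]; last first.
  by rewrite signr_even signr_even_add1 addrN !mul0r.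
rewrite addr0 /r_even addrC mulr_sumr; congr (_ + _); apply: eq_bigr => j _.
rewrite !signr_even; ring.
Qed.

Lemma r_odd_symmetrize k : (2 * k + 1 <= n)%N -> forall x1 x2 : R, inT x1 x2 ->
  r_odd n Mm k x1 x2 = symmetrize ((-1) ^+ (2 * k + 1)) (bnk n (2 * k + 1)) x1 x2.
Proof.
move=> k_le x1 x2 x12T; rewrite /symmetrize -addrA Mop_bnk_signed //.
rewrite (big_ord_even_odd _ (fun j => ((-1) ^+ _ + (-1) ^+ j) * Mm j _ * bnk n j x1 x2)).
rewrite [X in _ + (X + _)]big1 => [|j _]; last first.
  by rewrite signr_even signr_even_add1 addNr !mul0r.
rewrite add0r /r_odd addrC mulr_sumr; congr (_ + _); apply: eq_bigr => j _.
rewrite !signr_even_add1; ring.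
Qed.

End Basis.

Theorem corollary17 (R : realType) (n : nat) (Mm : nat -> nat -> R) :
  is_M_matrix n Mm ->
  (forall k : nat, (2 * k <= n)%N -> totally_symmetric (r_even n Mm k)) /\
  (forall k : nat, (2 * k + 1 <= n)%N ->
     forall x1 x2 : R, inT x1 x2 ->
       Mop (r_odd n Mm k) x1 x2 = - r_odd n Mm k x1 x2 /\
       - r_odd n Mm k x1 x2 = Rop (r_odd n Mm k) x1 x2).
Proof.
move=> Mm_M; split=> k k_le.
- apply: totally_symmetric_eq_inT (r_even_symmetrize Mm_M k_le) _.
  apply: totally_symmetric_Rop_Mop => x1 x2.
  + by rewrite (Rop_symmetrize (sqrr_sign _ _) (bnk_swap n _)) signr_even mul1r.
  + by rewrite (Mop_symmetrize (sqrr_sign _ _) (bnk_swap n _)) signr_even mul1r.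
- move=> x1 x2 x12T; have x21T := inT_swap x12T; have Mx12T := inT_Mop x12T.
  have := Mop_symmetrize (sqrr_sign _ _) (bnk_swap n (2 * k + 1)) x1 x2.
  have := Rop_symmetrize (sqrr_sign _ _) (bnk_swap n (2 * k + 1)) x1 x2.
  rewrite /Mop /Rop !(r_odd_symmetrize Mm_M k_le) // => -> ->.
  by rewrite signr_even_add1 mulN1r.
Qed.
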